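(* Let $0<p<1$, $0\le r\le1$ with $p\ne r$, $m:=r/p>1$, $T\in\mathbb{N}$ and $k\in\mathbb{N}$. Let $(H_i)_{i\ge1}$ be i.i.d. with $\mathbb{P}(H>n)=\frac{r-p}{(1-p)m^n-(1-r)}$ for $n\ge0$, $H_0:=T$, $N_T:=\min\{i\ge1:H_i>T\}$. Define the $k$-sample node depths: conditionally on $\{N_T\ge k\}$, choose a subset of $k$ tips $s_0<s_1<\dots<s_{k-1}$ uniformly at random among the $\binom{N_T}{k}$ subsets of $\{0,\dots,N_T-1\}$ (independently of $(H_i)$ given $N_T$), and set $H_{k,0}:=T$ and $H_{k,i}:=\max\{H_{s_{i-1}+1},\dots,H_{s_i}\}$ for $1\le i<k$. For $y\in(0,1)$, define the Bernoulli$(y)$-sample node depths: take an independent copy $(\tilde H_i)_{i\ge1}$ of $(H_i)$ with $\tilde H_0:=T$, $\tilde N_T:=\min\{i\ge1:\tilde H_i>T\}$, select each tip $i\in\{0,\dots,\tilde N_T-1\}$ independently with probability $y$, let $K$ be the number of selected tips and $t_0<\dots<t_{K-1}$ the selected tips, and set $H_{y,0}:=T$, $H_{y,i}:=\max\{\tilde H_{t_{i-1}+1},\dots,\tilde H_{t_i}\}$ for $1\le i<K$. Let $$\mu_k(\mathrm{d}y):=\frac{k\,\delta_T\,y^{k-1}}{\bigl(1-(1-\delta_T)(1-y)\bigr)^{k+1}}\,\mathrm{d}y,\qquad y\in(0,1),\qquad \delta_T:=\mathbb{P}(H>T).$$ Then for all $x_0=T$ and $x_1,\dots,x_{k-1}\in\{1,2,\dots,T\}$,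 $$\mathbb{P}(H_{k,0}=x_0,\dots,H_{k,k-1}=x_{k-1}\mid N_T\ge k)=\int_0^1\mu_k(\mathrm{d}y)\,\mathbb{P}(H_{y,0}=x_0,\dots,H_{y,k-1}=x_{k-1}\mid K=k).$$
   Context: The sequence $(H_i)_{i\ge1}$ is the coalescent point process of a Bienaymé–Galton–Watson process with $(p,r)$-linear fractional offspring law $\mathbb{P}(\xi=0)=1-r$, $\mathbb{P}(\xi=k)=rp(1-p)^{k-1}$ ($k\ge1$): $H_i$ is the coalescent time of consecutive tips $i-1,i$, and the coalescent time of tips $i<j$ is $\max\{H_{i+1},\dots,H_j\}$. The CPP$(T)$ tree has tips $0,\dots,N_T-1$ with node depths $H_0=T,H_1,\dots,H_{N_T-1}$. $H_{k,i}$ (resp. $H_{y,i}$) is the coalescent time between the $(i-1)$-th and $i$-th sampled tips. $\mu_k$ is a probability measure on $(0,1)$. *)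

From HB Require Import structures.
From mathcomp Require Import all_boot all_order all_algebra.
From mathcomp Require Import all_classical all_reals all_analysis.
Set Implicit Arguments. Unset Strict Implicit. Unset Printing Implicit Defensive.
Import Order.TTheory GRing.Theory Num.Theory.
Local Open Scope ring_scope.

Section CPP.
Variable R : realType.

Definition tailH (p r : R) (n : nat) : R :=
  (r - p) / ((1 - p) * (r / p) ^+ n - (1 - r)).

Definition pH (p r : R) (n : nat) : R :=
  (if n is n'.+1 then tailH p r n' else 1) - tailH p r n.

(* A CPP(T) tree with N = n+1 tips is encoded by h : 'I_n -> {0..T},
   h i = H_{i+1} for 1 <= i+1 <= n = N_T - 1.  Its probability is
   P(H_1 = h_0, ..., H_n = h_{n-1}, H_{n+1} > T)
   = prod_i P(H = h_i) * P(H > T)   (i.i.d. law of (H_i)),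
   which is the probability of {N_T = n+1, (H_1..H_n) = h}. *)
Definition ptree (p r : R) (T n : nat) (h : {ffun 'I_n -> 'I_T.+1}) : R :=
  (\prod_(i < n) pH p r (h i)) * tailH p r T.

Definition hlist (T n : nat) (h : {ffun 'I_n -> 'I_T.+1}) : seq nat :=
  [seq val (h i) | i <- enum 'I_n].

(* H_j for j >= 1 (read from the list H_1 :: H_2 :: ...) *)
Definition Hat (hs : seq nat) (j : nat) : nat := nth 0 hs j.-1.

Definition tips (N : nat) (s : {set 'I_N}) : seq nat :=
  sort leq [seq val i | i <- enum s].

(* sampled node depths: for selected tips t_0 < ... < t_{K-1},
   [:: T; max(H_{t_0+1..t_1}); ...; max(H_{t_{K-2}+1..t_{K-1}})] *)
Definition depths (T : nat) (hs : seq nat) (t : seq nat) : seq nat :=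
  T :: pairmap (fun a b => \max_(a.+1 <= j < b.+1) Hat hs j) (head 0%N t) (behead t).

(* P(H_{k,0} = x_0, ..., H_{k,k-1} = x_{k-1} | N_T >= k), where given N_T = N >= k
   the k-subset of tips is uniform among the 'C(N,k) subsets. *)
Definition ksample_prob (p r : R) (T k : nat) (x : seq nat) : R :=
  (\big[+%R/0%R]_(n <oo) (if (k <= n.+1)%N then
      \sum_(h : {ffun 'I_n -> 'I_T.+1})
        ptree p r h *
        (#|[set s : {set 'I_n.+1} | (#|s| == k) && (depths T (hlist h) (tips s) == x)]|%:R
           / ('C(n.+1, k))%:R)
    else 0))
  / (\big[+%R/0%R]_(n <oo) (if (k <= n.+1)%N then
      \sum_(h : {ffun 'I_n -> 'I_T.+1}) ptree p r h else 0)).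

(* P(H_{y,0} = x_0, ..., H_{y,k-1} = x_{k-1} | K = k), each tip selected
   independently with probability y. *)
Definition bsample_prob (p r : R) (T k : nat) (y : R) (x : seq nat) : R :=
  (\big[+%R/0%R]_(n <oo)
      \sum_(h : {ffun 'I_n -> 'I_T.+1})
        ptree p r h *
        \sum_(b : {set 'I_n.+1} | (#|b| == k) && (depths T (hlist h) (tips b) == x))
           (y ^+ #|b| * (1 - y) ^+ (n.+1 - #|b|)))
  / (\big[+%R/0%R]_(n <oo)
      \sum_(h : {ffun 'I_n -> 'I_T.+1})
        ptree p r h *
        \sum_(b : {set 'I_n.+1} | #|b| == k)
           (y ^+ #|b| * (1 - y) ^+ (n.+1 - #|b|))).

Definition muk_density (p r : R) (T k : nat) (y : R) : R :=
  k%:R * tailH p r T * y ^+ k.-1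
  / (1 - (1 - tailH p r T) * (1 - y)) ^+ k.+1.

End CPP.

From HB Require Import structures.
From mathcomp Require Import all_boot all_order all_algebra.
From mathcomp Require Import all_classical all_reals all_analysis.
From mathcomp Require Import ring lra zify.
From mathcomp Require Import measurable_realfun.
Import Order.TTheory GRing.Theory Num.Theory.
Import numFieldNormedType.Exports.
Local Open Scope classical_set_scope.
Local Open Scope ring_scope.

(* Given N_T = n + 1, which has the geometric law (1 - d)^n d with d = P(H > T),
   both samplings choose a k-subset of the n + 1 tips depending only on its size,
   so everything is expressed through c_n = sum of P(tree) * #{k-subsets with
   depths x}: the k-sample weighs c_n by C(n+1,k)^-1, the Bernoulli(y) sample by
   y^k (1-y)^(n+1-k).  The negative binomial series
   sum_N C(N,k) z^(N-k) = (1-z)^-(k+1) gives the Bernoulli normaliser in closed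
   form, the density of mu_k cancels it, and after exchanging sum and integral
   (monotone convergence) the Beta integral
   k * int_0^1 y^(k-1) (1-y)^(n+1-k) dy = C(n+1,k)^-1 recovers the k-sample
   weights. *)

Section TailH.
Context {R : realType} {p r : R}.
Hypotheses (p_gt0 : 0 < p) (p_lt1 : p < 1) (m_gt1 : 1 < r / p).

Let den n := (1 - p) * (r / p) ^+ n - (1 - r).

Let rBp_gt0 : 0 < r - p.
Proof. by rewrite subr_gt0 -(mul1r p) -ltr_pdivlMr. Qed.

Let den_lt n : den n < den n.+1.
Proof.
rewrite ltrD2r exprS ltr_pM2l ?subr_gt0 //.
by rewrite ltr_pMl // exprn_gt0 // (lt_trans ltr01).
Qed.

Let den0 : den 0 = r - p.
Proof. by rewrite /den expr0 mulr1; ring. Qed.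

Let den_gt0 n : 0 < den n.
Proof. by elim: n => [|n IH]; [rewrite den0 | exact: lt_trans (den_lt n)]. Qed.

Lemma tailH0 : tailH p r 0 = 1.
Proof. by rewrite /tailH -/(den 0) den0 divff ?gt_eqF. Qed.

Lemma tailH_gt0 n : 0 < tailH p r n.
Proof. exact: divr_gt0 rBp_gt0 (den_gt0 n). Qed.

Lemma tailH_decreasing : {homo tailH p r : m n / (m < n)%N >-> n < m}.
Proof.
apply: homo_ltn => [y x z /= yx zy|n]; first exact: lt_trans zy yx.
by rewrite /tailH -!/(den _) ltr_pM2l // ltf_pV2 ?posrE.
Qed.

Lemma tailH_le1 n : tailH p r n <= 1.
Proof. by case: n => [|n]; rewrite -tailH0 // ltW // tailH_decreasing. Qed.

Lemma tailH_lt1 n : (0 < n)%N -> tailH p r n < 1.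
Proof. by rewrite -tailH0 => /tailH_decreasing. Qed.

Lemma pH_ge0 n : 0 <= pH p r n.
Proof.
by rewrite subr_ge0; case: n => [|n]; rewrite ?tailH_le1 // ltW // tailH_decreasing.
Qed.

Lemma sum_pH n : \sum_(j < n.+1) pH p r j = 1 - tailH p r n.
Proof.
elim: n => [|n IH]; first by rewrite big_ord1.
by rewrite big_ord_recr /= IH /pH addrA subrK.
Qed.

End TailH.

Section Series.
Context {R : realType}.

Lemma bigoo_series (u : R ^nat) : \big[+%R/0%R]_(n <oo) u n = limn (series u).
Proof. by congr (limn _); apply/funext => N; rewrite /series /= big_mkord. Qed.

Lemma eseries_EFin (u : R ^nat) l : series u @ \oo --> l ->
  (\sum_(n <oo) (u n)%:E)%E = l%:E.
Proof.
move=> ul; rewrite -(cvg_lim _ ul) // -EFin_lim; last by apply/cvg_ex; exists l.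
by congr (limn _); apply/funext => N; rewrite sumEFin.
Qed.

Lemma cvg_series_geometric_tail (q : R) k : 0 <= q -> q < 1 ->
  series (fun n => if (k <= n.+1)%N then q ^+ n * (1 - q) else 0) @ \oo --> q ^+ k.-1.
Proof.
move=> q0 q1; set f := fun n => _.
have partial N : series f N = q ^+ k.-1 - q ^+ maxn N k.-1.
  elim: N => [|N IH]; first by rewrite /series /= big_geq // max0n subrr.
  rewrite seriesSr IH /f; case: ifPn => kN.
    by rewrite (maxn_idPl _) ?(maxn_idPl _) ?exprS; [ring | lia | lia].
  by rewrite !(maxn_idPr _) ?addr0 //; lia.
rewrite -(cvg_shiftn k.-1).
have -> : (fun n => series f (n + k.-1)%N) = fun n => q ^+ k.-1 - q ^+ k.-1 * q ^+ n.
  by apply/funext => n; rewrite partial (maxn_idPl _) ?leq_addl // exprD mulrC.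
suff : (fun n => q ^+ k.-1 - q ^+ k.-1 * q ^+ n) @ \oo --> q ^+ k.-1 - q ^+ k.-1 * 0.
  by rewrite mulr0 subr0.
apply: cvgB; first exact: cvg_cst.
by apply: cvgMr; apply: cvg_expr; rewrite ger0_norm.
Qed.

Lemma cvg_series_negative_binomial (z : R) k : 0 <= z -> z < 1 ->
  series (fun N => 'C(N, k)%:R * z ^+ (N - k)) @ \oo --> ((1 - z) ^+ k.+1)^-1.
Proof.
move=> z0 z1; have z1_gt0 : 0 < 1 - z by rewrite subr_gt0.
elim: k => [|k IH].
  have -> : (fun N => 'C(N, 0)%:R * z ^+ (N - 0)) = geometric 1 z.
    by apply/funext => N; rewrite bin0 subn0.
  by rewrite expr1 -(mul1r (_^-1)); apply: cvg_geometric_series; rewrite ger0_norm.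
set v := fun N => _ in IH; set w := fun N => _.
have v_ge0 N : 0 <= v N by rewrite mulr_ge0 ?exprn_ge0.
have w_ge0 N : 0 <= w N by rewrite mulr_ge0 ?exprn_ge0.
have pascal M : series w M.+1 = z * series w M + series v M.
  rewrite /series /= big_nat_recl // {1}/w bin0n mul0r add0r.
  rewrite big_distrr /= -big_split /=; apply: eq_bigr => N _.
  rewrite /w /v binS natrD mulrDl subSS; congr (_ + _).
  have [Nk|kN] := leqP N k; first by rewrite bin_small ?mul0r ?mulr0 // ltnS.
  by rewrite mulrCA -exprS subnSK.
have wE M : series w M = (1 - z)^-1 * (series v M - w M).
  apply: (mulfI (lt0r_neq0 z1_gt0)); rewrite mulrA divff ?lt0r_neq0 // mul1r.
  by have := pascal M; rewrite seriesSr => e; rewrite mulrBl mul1r; lra.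
have w_cvg : cvgn (series w).
  apply: nondecreasing_is_cvgn; first exact: nondecreasing_series.
  exists ((1 - z)^-1 * limn (series v)) => _ [M _ <-].
  rewrite wE; apply: ler_wpM2l; first by rewrite invr_ge0 ltW.
  apply: (@le_trans _ _ (series v M)); first by rewrite gerBl.
  apply: nondecreasing_cvgn_le; first exact: nondecreasing_series.
  by apply/cvg_ex; exists ((1 - z) ^- k.+1).
rewrite (_ : series w = fun M => (1 - z)^-1 * (series v M - w M)); last exact/funext.
rewrite exprS invfM -(subr0 ((1 - z) ^- k.+1)).
by apply: cvgMr; apply: cvgB => //; exact: cvg_series_cvg_0.
Qed.

End Series.

Section Beta.
Context {R : realType}.

Lemma integral_XMonemX_oo a b :
  (\int[lebesgue_measure]_(y in `]0%R, 1%R[) (XMonemX a b y)%:E)%E =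
  (@beta_fun R a.+1 b.+1)%:E.
Proof.
have mX A : measurable_fun A (fun y => (@XMonemX R a b y)%:E).
  by apply/measurable_EFinP; exact: measurable_XMonemX.
rewrite integral_itv_obnd_cbnd // integral_itv_bndo_bndc //.
by rewrite EFin_beta_fun integral_XMonemX_restrict setTI.
Qed.

Lemma binomial_beta k n : (0 < k)%N -> (k <= n)%N ->
  k%:R * beta_fun k (n - k).+1 = ('C(n, k)%:R)^-1 :> R.
Proof.
case: k => // k _ kn; rewrite beta_fun_fact (_ : (k + (n - k.+1)).+1 = n); last by lia.
rewrite -(bin_fact kn) factS !natrM.
by field; rewrite addrC natr1 !pnatr_eq0 -!lt0n !fact_gt0 bin_gt0 kn.
Qed.

End Beta.

Section BetaMixture.
Variables (R : realType) (d : R) (k : nat) (c : nat -> R).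
Hypotheses (d_gt0 : 0 < d) (d_le1 : d <= 1) (k_gt0 : (0 < k)%N).
Hypothesis qk_gt0 : 0 < (1 - d) ^+ k.-1.
Hypothesis c_ge0 : forall n, 0 <= c n.
Hypothesis c_le : forall n, c n <= 'C(n.+1, k)%:R * ((1 - d) ^+ n * d).

Local Notation q := (1 - d).
(* probability that a Bernoulli(y) sample of n + 1 tips is one given k-subset *)
Local Notation bern y n := (y ^+ k * (1 - y) ^+ (n.+1 - k)).

Let q_ge0 : 0 <= q. Proof. by rewrite subr_ge0. Qed.
Let q_lt1 : q < 1. Proof. by rewrite ltrBlDr ltrDl. Qed.
Let qk_neq0 : q ^+ k.-1 != 0. Proof. exact: lt0r_neq0. Qed.

Let c_small n : (n.+1 < k)%N -> c n = 0.
Proof.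
move=> nk; apply/le_anti; rewrite c_ge0 andbT.
by have := c_le n; rewrite bin_small // mul0r.
Qed.

Let bern_ge0 (y : R) n : 0 <= y -> y <= 1 -> 0 <= bern y n.
Proof. by move=> y0 y1; rewrite mulr_ge0 ?exprn_ge0 ?subr_ge0. Qed.

Let cvg_series_enough_tips :
  series (fun n => if (k <= n.+1)%N then q ^+ n * d else 0) @ \oo --> q ^+ k.-1.
Proof. by have := cvg_series_geometric_tail _ k q_ge0 q_lt1; rewrite subKr. Qed.

Let kweight n := if (k <= n.+1)%N then c n / 'C(n.+1, k)%:R else 0.

Let is_cvg_series_kweight : cvgn (series kweight).
Proof.
apply: (series_le_cvg (v_ := fun n => if (k <= n.+1)%N then q ^+ n * d else 0)).
- by move=> n; rewrite /kweight; case: ifP => // _; rewrite divr_ge0.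
- by move=> n; case: ifP => // _; rewrite mulr_ge0 ?exprn_ge0 ?(ltW d_gt0).
- move=> n; rewrite /kweight; case: ifP => // kn.
  by rewrite ler_pdivrMr ?ltr0n ?bin_gt0 // mulrC.
- by apply/cvg_ex; exists (q ^+ k.-1).
Qed.

Let qy_lt1 (y : R) : 0 < y -> y < 1 -> q * (1 - y) < 1.
Proof.
move=> y0 y1; apply: (@le_lt_trans _ _ (1 - y)); last by rewrite gtrBl.
by rewrite ler_piMl ?subr_ge0 ?gerBl ?ltW.
Qed.

Let cvg_series_binomial_mass (y : R) : 0 < y -> y < 1 ->
  series (fun n => q ^+ n * d * ('C(n.+1, k)%:R * bern y n)) @ \oo -->
    d * y ^+ k * q ^+ k.-1 / (1 - q * (1 - y)) ^+ k.+1.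
Proof.
move=> y0 y1; set z := q * (1 - y).
have z0 : 0 <= z by rewrite /z mulr_ge0 // subr_ge0 ltW.
have z1 : z < 1 := qy_lt1 y y0 y1.
have massE n : q ^+ n * d * ('C(n.+1, k)%:R * bern y n) =
    d * y ^+ k * q ^+ k.-1 * ('C(n.+1, k)%:R * z ^+ (n.+1 - k)).
  have [nk|kn] := ltnP n.+1 k; first by rewrite bin_small // !mul0r !mulr0.
  have -> : q ^+ n = q ^+ k.-1 * q ^+ (n.+1 - k) by rewrite -exprD; congr (_ ^+ _); lia.
  by rewrite exprMn; ring.
rewrite (_ : series _ = fun N =>
    d * y ^+ k * q ^+ k.-1 * series (fun n => 'C(n, k)%:R * z ^+ (n - k)) N.+1).
  apply: cvgMr; have := cvg_series_negative_binomial _ k z0 z1.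
  by rewrite -cvg_shiftS.
apply/funext => N; rewrite [in RHS]/series /= big_nat_recl // bin_small // mul0r add0r.
by rewrite /series /= big_distrr; apply: eq_bigr => n _; exact: massE.
Qed.

Let is_cvg_series_sampled (y : R) : 0 < y -> y < 1 ->
  cvgn (series (fun n => c n * bern y n)).
Proof.
move=> y0 y1; have b0 n : 0 <= bern y n := bern_ge0 y n (ltW y0) (ltW y1).
apply: (series_le_cvg (v_ := fun n => q ^+ n * d * ('C(n.+1, k)%:R * bern y n))).
- by move=> n; rewrite mulr_ge0.
- move=> n; apply: mulr_ge0; last exact: mulr_ge0 (ler0n _ _) (b0 n).
  by rewrite mulr_ge0 ?exprn_ge0 ?(ltW d_gt0).
- by move=> n; rewrite [leRHS]mulrCA [leRHS]mulrA ler_wpM2r.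
- by apply/cvg_ex; eexists; exact: cvg_series_binomial_mass.
Qed.

Let mixture_term n (y : R) := k%:R / q ^+ k.-1 * c n * XMonemX k.-1 (n.+1 - k) y.

Let mixture_integrandE (y : R) : 0 < y -> y < 1 ->
  (k%:R * d * y ^+ k.-1 / (1 - q * (1 - y)) ^+ k.+1 *
   (limn (series (fun n => c n * bern y n)) /
    limn (series (fun n => q ^+ n * d * ('C(n.+1, k)%:R * bern y n)))))%:E =
  (\sum_(n <oo) (mixture_term n y)%:E)%E.
Proof.
move=> y0 y1; have y_neq0 := lt0r_neq0 y0.
have yk : y ^+ k = y * y ^+ k.-1 by rewrite -exprS prednK.
have D_neq0 : (1 - q * (1 - y)) ^+ k.+1 != 0.
  by rewrite expf_neq0 // subr_eq0 eq_sym lt_eqF // qy_lt1.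
set U := series (fun n => c n * bern y n).
rewrite (cvg_lim _ (cvg_series_binomial_mass y y0 y1)) //.
rewrite (eseries_EFin _ (k%:R / (q ^+ k.-1 * y) * limn U)).
  by congr (_%:E); rewrite yk; field; rewrite y_neq0 qk_neq0 D_neq0 expf_neq0 ?lt0r_neq0.
rewrite (_ : series _ = fun N => k%:R / (q ^+ k.-1 * y) * U N).
  exact: cvgMr (is_cvg_series_sampled y y0 y1).
apply/funext => N; rewrite /U /series /= big_distrr; apply: eq_bigr => n _.
by rewrite /mixture_term /XMonemX /unstable.onem yk /=; field; rewrite y_neq0 qk_neq0.
Qed.

Let measurable_mixture_term n :
  measurable_fun (`]0%R, 1%R[%classic : set R) (fun y => (mixture_term n y)%:E).
Proof.
apply/measurable_EFinP/measurable_funM; first exact: measurable_cst.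
exact: measurable_XMonemX.
Qed.

Let coef_ge0 n : 0 <= k%:R / q ^+ k.-1 * c n.
Proof. by rewrite mulr_ge0 // divr_ge0 // ltW. Qed.

Let XMonemX_oo_ge0 a b (y : R) :
  (`]0%R, 1%R[%classic : set R) y -> 0 <= XMonemX a b y.
Proof.
by rewrite /= in_itv /= => /andP[y0 y1]; apply: XMonemX_ge0; rewrite in_itv /= !ltW.
Qed.

Let mixture_term_ge0 n (y : R) :
  (`]0%R, 1%R[%classic : set R) y -> (0 <= (mixture_term n y)%:E)%E.
Proof. by move=> y01; rewrite lee_fin mulr_ge0 ?coef_ge0 ?XMonemX_oo_ge0. Qed.

Let integral_mixture_term n :
  (\int[lebesgue_measure]_(y in `]0%R, 1%R[) (mixture_term n y)%:E)%E =
  (kweight n / q ^+ k.-1)%:E.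
Proof.
under eq_integral do rewrite EFinM.
rewrite ge0_integralZl //; last 3 first.
- by apply/measurable_EFinP; exact: measurable_XMonemX.
- by move=> y y01; rewrite lee_fin XMonemX_oo_ge0.
- by rewrite lee_fin coef_ge0.
rewrite integral_XMonemX_oo prednK // -EFinM /kweight; congr (_%:E).
have [kn|nk] := leqP k n.+1; last by rewrite c_small // mulr0 !mul0r.
by rewrite mulrAC -(@binomial_beta R k n.+1 k_gt0 kn); field.
Qed.

Lemma beta_mixture :
  ((limn (series (fun n => if (k <= n.+1)%N then c n / 'C(n.+1, k)%:R else 0)) /
    limn (series (fun n => if (k <= n.+1)%N then q ^+ n * d else 0)))%:E =
   \int[lebesgue_measure]_(y in `]0%R, 1%R[)
     (k%:R * d * y ^+ k.-1 / (1 - q * (1 - y)) ^+ k.+1 *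
      (limn (series (fun n => c n * bern y n)) /
       limn (series (fun n => q ^+ n * d * ('C(n.+1, k)%:R * bern y n)))))%:E)%E.
Proof.
transitivity (\int[lebesgue_measure]_(y in `]0%R, 1%R[)
               \sum_(n <oo) (mixture_term n y)%:E)%E.
  rewrite integral_nneseries //; under eq_eseriesr do rewrite integral_mixture_term.
  rewrite (cvg_lim _ cvg_series_enough_tips) // -/kweight.
  symmetry; apply: eseries_EFin.
  rewrite (_ : series (fun n => kweight n / q ^+ k.-1) =
             fun N => series kweight N / q ^+ k.-1).
    exact: cvgMl is_cvg_series_kweight.
  by apply/funext => N; rewrite /series /= big_distrl.
apply: eq_integral => y; rewrite inE /= in_itv /= => /andP[y0 y1].
by rewrite mixture_integrandE.
Qed.

End BetaMixture.

Lemma sum_eq_const {V : nmodType} {I : finType} (Q : pred I) (F : I -> V) c :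
  (forall i, Q i -> F i = c) -> \sum_(i | Q i) F i = c *+ #|[set i | Q i]%SET|.
Proof.
move=> FQ; rewrite (eq_bigr _ FQ) -sumr_const.
by apply: eq_bigl => i; rewrite inE.
Qed.

Section CoalescentPointProcess.
Variables (R : realType) (p r : R) (T k : nat) (x : seq nat).
Hypotheses (p_gt0 : 0 < p) (p_lt1 : p < 1) (m_gt1 : 1 < r / p).

Local Notation d := (tailH p r T).
Local Notation bern y n := (y ^+ k * (1 - y) ^+ (n.+1 - k)).
Local Notation matches n h :=
  [set s : {set 'I_n.+1} | (#|s| == k) && (depths T (hlist h) (tips s) == x)]%SET.

Lemma ptree_ge0 n (h : {ffun 'I_n -> 'I_T.+1}) : 0 <= ptree p r h.
Proof.
rewrite mulr_ge0 ?(ltW (tailH_gt0 p_gt0 p_lt1 m_gt1 T)) //.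
by apply: prodr_ge0 => i _; exact: pH_ge0.
Qed.

Lemma sum_ptree n : \sum_(h : {ffun 'I_n -> 'I_T.+1}) ptree p r h = (1 - d) ^+ n * d.
Proof.
rewrite -big_distrl /=; congr (_ * _).
rewrite -(bigA_distr_bigA (fun (i : 'I_n) (j : 'I_T.+1) => pH p r j)) /=.
by rewrite prodr_const card_ord sum_pH.
Qed.

Definition match_mass n :=
  \sum_(h : {ffun 'I_n -> 'I_T.+1}) ptree p r h * #|matches n h|%:R.

Lemma match_mass_ge0 n : 0 <= match_mass n.
Proof. by apply: sumr_ge0 => h _; rewrite mulr_ge0 ?ptree_ge0. Qed.

Lemma match_mass_le n : match_mass n <= 'C(n.+1, k)%:R * ((1 - d) ^+ n * d).
Proof.
rewrite -sum_ptree mulr_sumr; apply: ler_sum => h _.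
rewrite mulrC ler_wpM2r ?ptree_ge0 // ler_nat -[X in (_ <= 'C(X, _))%N](card_ord n.+1).
rewrite -card_draws; apply/subset_leq_card/fintype.subsetP => s.
by rewrite !inE => /andP[].
Qed.

Lemma ksample_probE : ksample_prob p r T k x =
  limn (series (fun n => if (k <= n.+1)%N then match_mass n / 'C(n.+1, k)%:R else 0)) /
  limn (series (fun n => if (k <= n.+1)%N then (1 - d) ^+ n * d else 0)).
Proof.
rewrite -!bigoo_series /ksample_prob; congr (_ / _); congr (limn _);
  apply/funext => N; apply: eq_bigr => n _ /=; case: ifP => // _; last exact: sum_ptree.
by rewrite /match_mass mulr_suml; apply: eq_bigr => h _; rewrite mulrA.
Qed.

Lemma bsample_probE y : bsample_prob p r T k y x =
  limn (series (fun n => match_mass n * bern y n)) /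
  limn (series (fun n => (1 - d) ^+ n * d * ('C(n.+1, k)%:R * bern y n))).
Proof.
rewrite -!bigoo_series /bsample_prob; congr (_ / _); congr (limn _);
  apply/funext => N; apply: eq_bigr => n _ /=.
  rewrite /match_mass mulr_suml; apply: eq_bigr => h _; rewrite -mulrA.
  by rewrite (sum_eq_const _ _ (bern y n)) ?mulr_natl // => b /andP[/eqP ->].
rewrite -sum_ptree mulr_suml; apply: eq_bigr => h _.
rewrite (sum_eq_const _ _ (bern y n)) => [|b /eqP -> //].
by rewrite card_draws card_ord mulr_natl.
Qed.

End CoalescentPointProcess.

Theorem theorem2p8 (R : realType) (p r : R) (T k : nat) (x : seq nat) :
  0 < p < 1 -> 0 <= r <= 1 -> p != r -> 1 < r / p ->
  (1 <= k)%N ->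
  size x = k -> nth 0%N x 0 = T ->
  (forall i, (0 < i < k)%N -> (1 <= nth 0%N x i <= T)%N) ->
  ((ksample_prob p r T k x)%:E =
   \int[lebesgue_measure]_(y in `]0%R, 1%R[)
      (muk_density p r T k y * bsample_prob p r T k y x)%:E)%E.
Proof.
move=> /andP[p_gt0 p_lt1] _ _ m_gt1 k_gt0 _ _ x_in.
have qk_gt0 : 0 < (1 - tailH p r T) ^+ k.-1.
  case: k k_gt0 x_in => [//|[_ _|k _ x_in]]; first by rewrite expr0.
  have /andP[x1_ge1 x1_leT] := x_in 1%N isT.
  by rewrite exprn_gt0 // subr_gt0 tailH_lt1 // (leq_trans x1_ge1 x1_leT).
rewrite ksample_probE; under eq_integral do rewrite bsample_probE.
apply: beta_mixture => //.
- exact: tailH_gt0.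
- exact: tailH_le1.
- exact: match_mass_ge0.
- exact: match_mass_le.
Qed.
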